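(* Let $G=(V,E)$ be a multigraph with vertices $u_1,\dots,u_k$ ($k\ge2$) and edges $e_1,\dots,e_\ell$ with $\ell>2k$, and consider the fair division instance $\mathcal{I}(G)$ described in the context. If $G$ has an independent set of size $t$, then $\mathcal{I}(G)$ has an EF1 allocation with social welfare at least $t$.
   Context: Instance $\mathcal{I}(G)$: agents are $a_i^{(j)}$ ($1\le i\le\ell$, $1\le j\le k$) and $s^{(j)}$ ($1\le j\le k$), so $n=k\ell+k$. Items are $b_r^{(j)}$ ($1\le r\le k$, $1\le j\le k$), with $B^{(j)}=\{b_1^{(j)},\dots,b_k^{(j)}\}$, and $c_1,\dots,c_{k^2}$ forming $C$, so $m=2k^2$. Let $\tau=2/k^2$. Agent $s^{(j)}$ values each item of $B^{(j)}$ at $1/k$ and every other item at $0$. If edge $e_i$ has endpoints $u_{i_1},u_{i_2}$, agent $a_i^{(j)}$ values each of $b_{i_1}^{(j)},b_{i_2}^{(j)}$ at $\tau/2$, each item of $C$ at $(1-\tau)/k^2$, and every other item at $0$. Valuations are additive (and normalized). An allocation is a partition of the items among agents; it is EF1 if for all agents $x\ne y$ with $A_y\ne\emptyset$ there is $g\in A_y$ with $v_x(A_x)\ge v_x(A_y\setminus\{g\})$; social welfare is $\sum_x v_x(A_x)$. An independent set is a set of vertices no two of which are joined by an edge. *)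

From mathcomp Require Import all_boot all_order all_algebra.
Set Implicit Arguments. Unset Strict Implicit. Unset Printing Implicit Defensive.
Import Order.TTheory GRing.Theory Num.Theory.
Local Open Scope ring_scope.

(* Agents: inl (i, j) = a_i^(j) ; inr j = s^(j). *)
Definition agent (k l : nat) : finType := (('I_l * 'I_k)%type + 'I_k)%type.
(* Items: inl (r, j) = b_r^(j) ; inr c = c_c (c < k^2). *)
Definition item (k : nat) : finType := (('I_k * 'I_k)%type + 'I_(k * k))%type.

Section Instance.
Variables (R : realFieldType) (k l : nat) (ends1 ends2 : 'I_l -> 'I_k).

Definition tau : R := 2 / (k * k)%:R.

Definition val (x : agent k l) (g : item k) : R :=
  match x, g with
  | inr j, inl (_, j') => if j' == j then 1 / k%:R else 0
  | inr _, inr _ => 0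
  | inl (i, j), inl (r, j') =>
      if (j' == j) && ((r == ends1 i) || (r == ends2 i)) then tau / 2 else 0
  | inl _, inr _ => (1 - tau) / (k * k)%:R
  end.

Definition valS (x : agent k l) (S : {set item k}) : R := \sum_(g in S) val x g.

Definition bundle (A : {ffun item k -> agent k l}) (x : agent k l) : {set item k} :=
  [set g | A g == x].

Definition EF1 (A : {ffun item k -> agent k l}) : Prop :=
  forall x y : agent k l, x != y -> bundle A y != set0 ->
    exists2 g, g \in bundle A y &
      valS x (bundle A y :\ g) <= valS x (bundle A x).

Definition social_welfare (A : {ffun item k -> agent k l}) : R :=
  \sum_(x : agent k l) valS x (bundle A x).

End Instance.

Definition independent (k l : nat) (ends1 ends2 : 'I_l -> 'I_k) (S : {set 'I_k}) : Prop :=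
  forall e : 'I_l, ~~ ((ends1 e \in S) && (ends2 e \in S)).

From Pilot Require Import Defs.
From mathcomp Require Import all_boot all_order all_algebra.
From mathcomp Require Import zify.
Set Implicit Arguments. Unset Strict Implicit. Unset Printing Implicit Defensive.
Import Order.TTheory GRing.Theory Num.Theory.
Local Open Scope ring_scope.

(* Give s^(j) the items b_r^(j) with u_r in the independent set S, worth
   |S|/k to it, hence welfare |S| in total; hand each remaining item to its
   own agent a_i^(j), which is possible because there are 2k^2 items and
   more than 2k^2 agents a_i^(j).  Singleton bundles are never envied beyond
   one item, and an agent other than s^(j) values at most one item of s^(j)'s
   bundle: for an a-agent this is the independence of S, and any other
   s-agent values none of it.  Hence removing that item kills all envy. *)

Definition embedding {T U : finType} (le_TU : (#|T| <= #|U|)%N) (x : T) : U :=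
  enum_val (widen_ord le_TU (enum_rank x)).

Lemma embedding_inj {T U : finType} (le_TU : (#|T| <= #|U|)%N) :
  injective (embedding le_TU).
Proof.
move=> x y /enum_val_inj/(congr1 (@nat_of_ord _)) /= eq_rank.
by apply: enum_rank_inj; apply: ord_inj.
Qed.

Lemma card_item_le (k l : nat) : (2 * k < l)%N ->
  (#|item k| <= #|{: 'I_l * 'I_k}|)%N.
Proof. by rewrite card_sum !card_prod !card_ord; nia. Qed.

Section Instance.
Variables (R : realFieldType) (k l : nat) (ends1 ends2 : 'I_l -> 'I_k).

Local Notation val := (Defs.val R ends1 ends2).
Local Notation valS := (Defs.valS R ends1 ends2).

Lemma val_ge0 x g : (1 < k)%N -> 0 <= val x g.
Proof.
move=> k_gt1.
have k_gt0 : 0 < k%:R :> R by rewrite ltr0n; lia.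
have kk_gt0 : 0 < (k * k)%:R :> R by rewrite ltr0n; lia.
have tau_ge0 : 0 <= tau R k by rewrite divr_ge0 // ltW.
case: x g => [[i j]|j] [[r j']|c] //=.
- by case: ifP => // _; rewrite divr_ge0.
- rewrite divr_ge0 ?(ltW kk_gt0) // subr_ge0 ler_pdivrMr // mul1r ler_nat; nia.
- by case: ifP => // _; rewrite divr_ge0 // ltW.
Qed.

Lemma valS_ge0 x B : (1 < k)%N -> 0 <= valS x B.
Proof. by move=> k_gt1; apply: sumr_ge0 => g _; apply: val_ge0. Qed.

Lemma valS_setD1_eq0 x (B : {set item k}) :
  {in B &, forall g g', val x g != 0 -> val x g' != 0 -> g = g'} ->
  B != set0 -> exists2 g, g \in B & valS x (B :\ g) = 0.
Proof.
move=> uniq_supp /set0Pn[g0 g0B].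
have [g /andP[gB xg_neq0] | xB_eq0] := pickP [pred g | (g \in B) && (val x g != 0)].
  exists g => //; apply: big1 => g'; rewrite !inE => /andP[g'g g'B].
  by apply: contraNeq g'g => xg'_neq0; apply/eqP/uniq_supp.
exists g0 => //; apply: big1 => g; rewrite !inE => /andP[_ gB].
by apply/eqP; move: (xB_eq0 g); rewrite /= gB => /negbFE.
Qed.

Lemma val_b_independent (S : {set 'I_k}) x j r1 r2 :
  independent ends1 ends2 S -> x != inr j -> r1 \in S -> r2 \in S ->
  val x (inl (r1, j)) != 0 -> val x (inl (r2, j)) != 0 -> r1 = r2.
Proof.
move=> indS; case: x => [[i j']|j'] x_neq r1S r2S /=; last first.
  have jj' : j != j' by apply: contraNneq x_neq => ->.
  by rewrite (negbTE jj') eqxx.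
case: ifP => [/andP[_ r1i] _|]; last by rewrite eqxx.
case: ifP => [/andP[_ r2i] _|]; last by rewrite eqxx.
move: r1S r2S (indS i).
by case/orP: r1i => /eqP->; case/orP: r2i => /eqP-> // -> ->.
Qed.

Lemma valS_s_bundle (S : {set 'I_k}) j :
  valS (inr j) [set inl (r, j) | r in S] = #|S|%:R / k%:R.
Proof.
rewrite /Defs.valS big_imset /=; last by move=> r1 r2 _ _ [].
under eq_bigr do rewrite eqxx.
by rewrite sumr_const -[LHS]mulr_natl mul1r.
Qed.

Section Allocation.
Variables (S : {set 'I_k}) (h : item k -> 'I_l * 'I_k).
Hypothesis h_inj : injective h.

Definition alloc : {ffun item k -> agent k l} := [ffun g =>
  match g with
  | inl (r, j) => if r \in S then inr j else inl (h g)
  | inr _ => inl (h g)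
  end].

Lemma bundle_alloc_s j : bundle alloc (inr j) = [set inl (r, j) | r in S].
Proof.
apply/setP => g; rewrite inE ffunE; apply/eqP/imsetP.
  by case: g => [[r j']|c] //; case: ifP => // rS [<-]; exists r.
by case=> r rS ->; rewrite rS.
Qed.

Lemma bundle_alloc_a p g g' :
  g \in bundle alloc (inl p) -> g' \in bundle alloc (inl p) -> g = g'.
Proof.
have alloc_h g1 : alloc g1 = inl p -> h g1 = p.
  by rewrite ffunE; case: g1 => [[r j]|c]; [case: ifP => _|]; congruence.
by rewrite !inE => /eqP/alloc_h hg /eqP/alloc_h hg'; apply: h_inj; rewrite hg hg'.
Qed.

Lemma alloc_EF1 : (1 < k)%N -> independent ends1 ends2 S ->
  EF1 R ends1 ends2 alloc.
Proof.
move=> k_gt1 indS x y xy y_nonempty.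
have [g gy envy_eq0] : exists2 g, g \in bundle alloc y & valS x (bundle alloc y :\ g) = 0.
  apply: valS_setD1_eq0 y_nonempty.
  case: y xy => [p|j] xy g g'; first by move=> gp g'p _ _; exact: bundle_alloc_a gp g'p.
  rewrite bundle_alloc_s => /imsetP[r1 r1S ->] /imsetP[r2 r2S ->] xr1 xr2.
  by rewrite (val_b_independent indS xy r1S r2S xr1 xr2).
by exists g; rewrite // envy_eq0 valS_ge0.
Qed.

Lemma alloc_welfare : (1 < k)%N -> #|S|%:R <= social_welfare R ends1 ends2 alloc.
Proof.
move=> k_gt1; rewrite /social_welfare big_sumType /=.
have -> : \sum_(j < k) valS (inr j) (bundle alloc (inr j)) = #|S|%:R.
  under eq_bigr do rewrite bundle_alloc_s valS_s_bundle.
  rewrite sumr_const card_ord -[LHS]mulr_natr mulfVK //.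
  by rewrite pnatr_eq0 -lt0n; lia.
by rewrite lerDr; apply: sumr_ge0 => x _; apply: valS_ge0.
Qed.

End Allocation.
End Instance.

Theorem mainTheorem12 (R : realFieldType) (k l : nat)
    (ends1 ends2 : 'I_l -> 'I_k)
    (loopless : forall e, ends1 e != ends2 e)
    (hk : (2 <= k)%N) (hl : (2 * k < l)%N)
    (S : {set 'I_k}) (t : nat) :
  independent ends1 ends2 S -> #|S| = t ->
  exists A : {ffun item k -> agent k l},
    EF1 R ends1 ends2 A /\ t%:R <= social_welfare R ends1 ends2 A.
Proof.
move=> indS <-.
pose h := embedding (card_item_le hl).
have h_inj : injective h by apply: embedding_inj.
exists (alloc S h); split.
- exact: alloc_EF1 _ h_inj hk indS.
- exact: alloc_welfare.
Qed.
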